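(* Let $\{\alpha_k\}$ be the stepsize sequence generated by Algorithm 1 or Algorithm 2 (described in the context) under the Standing Assumption and Matrix Assumption of the context, and suppose the algorithm does not terminate finitely. Then there exists $\alpha_{\min}>0$ such that $\alpha_k\ge\alpha_{\min}$ for all $k\in\mathbb{N}$.
   Context: Notation: $g_k=\nabla f(x_k)$, $c_k=c(x_k)$, $J_k=\nabla c(x_k)^T$; $\phi(x,\tau)=\tau f(x)+\|c(x)\|_1$; $\Delta q(x,\tau,g,H,d)=-\tau(g^Td+\frac12\max\{d^THd,0\})+\|c(x)\|_1$. Matrix Assumption: symmetric $H_k$ with $\|H_k\|_2\le\kappa_H$ and $u^TH_ku\ge\zeta\|u\|_2^2$ whenever $J_ku=0$. Common iteration: $(d_k,y_k)$ solves $H_kd_k+J_k^Ty_k=-g_k$, $J_kd_k=-c_k$; stop if $g_k+J_k^Ty_k=0$ and $c_k=0$. $\tau_k^{trial}=\infty$ if $g_k^Td_k+\max\{d_k^TH_kd_k,0\}\le0$, else $\frac{(1-\sigma)\|c_k\|_1}{g_k^Td_k+\max\{d_k^TH_kd_k,0\}}$; $\tau_k=\tau_{k-1}$ if $\tau_{k-1}\le\tau_k^{trial}$, else $(1-\epsilon)\tau_k^{trial}$ (with $\tau_{-1}>0$, $\epsilon,\sigma\in(0,1)$); $x_{k+1}=x_k+\alpha_kd_k$. (SD) for trial $\alpha$: $\phi(x_k+\alpha d_k,\tau_k)\le\phi(x_k,\tau_k)-\eta\alpha\Delta q(x_k,\tau_k,g_k,H_k,d_k)$, $\eta\in(0,1)$.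 Algorithm 1 (inputs also $\rho>1$, $L_{-1}>0$, $\gamma_{-1,i}>0$): choose $L_{k,0}\in(0,L_{k-1}]$, $\gamma_{k,i,0}\in(0,\gamma_{k-1,i}]$; for $j=0,1,\dots$ with $\Lambda_{k,j}=\tau_kL_{k,j}+\sum_i\gamma_{k,i,j}$: $\widehat\alpha_{k,j}=\frac{2(1-\eta)\Delta q(x_k,\tau_k,g_k,H_k,d_k)}{\Lambda_{k,j}\|d_k\|_2^2}$, $\widetilde\alpha_{k,j}=\widehat\alpha_{k,j}-\frac{4\|c_k\|_1}{\Lambda_{k,j}\|d_k\|_2^2}$; $\alpha_{k,j}=\widehat\alpha_{k,j}$ if $\widehat\alpha_{k,j}<1$, $1$ if $\widetilde\alpha_{k,j}\le1\le\widehat\alpha_{k,j}$, $\widetilde\alpha_{k,j}$ if $\widetilde\alpha_{k,j}>1$; accept ($\alpha_k=\alpha_{k,j}$, $L_k=L_{k,j}$, $\gamma_{k,i}=\gamma_{k,i,j}$) if (SD) holds or if both $f(x_k+\alpha_{k,j}d_k)\le f(x_k)+\alpha_{k,j}g_k^Td_k+\frac12L_{k,j}\alpha_{k,j}^2\|d_k\|_2^2$ (LF) and $|c_i(x_k+\alpha_{k,j}d_k)|\le|c_i(x_k)+\alpha_{k,j}\nabla c_i(x_k)^Td_k|+\frac12\gamma_{k,i,j}\alpha_{k,j}^2\|d_k\|_2^2$ (LC$_i$) for all $i$; otherwise multiply $L_{k,j}$ by $\rho$ if (LF) fails and $\gamma_{k,i,j}$ by $\rho$ if (LC$_i$) fails.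 Algorithm 2 (inputs also $\nu\in(0,1)$, $\alpha>0$): $\alpha_k=\nu^j\alpha$ for the smallest $j\ge0$ such that (SD) holds. Standing Assumption: an open convex set $\mathcal X$ contains all iterates and trial points $x_k+\alpha_{k,j}d_k$; $f$ is $C^1$, bounded below on $\mathcal X$, $\nabla f$ bounded and $L$-Lipschitz on $\mathcal X$; $c$, $\nabla c^T$ bounded on $\mathcal X$; $\nabla c_i$ is $\gamma_i$-Lipschitz on $\mathcal X$; singular values of $\nabla c(x)^T$ bounded away from zero uniformly over $\mathcal X$. *)

From mathcomp Require Import all_boot all_order all_algebra.
From mathcomp Require Import all_classical all_reals all_analysis.
Import Order.TTheory GRing.Theory Num.Theory.
Import numFieldNormedType.Exports.
Local Open Scope ring_scope.
Local Open Scope classical_set_scope.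

Set Implicit Arguments.
Unset Strict Implicit.
Unset Printing Implicit Defensive.

Definition dotp (R : realType) (n : nat) (u v : 'cV[R]_n) : R :=
  \sum_(i < n) u i 0 * v i 0.

Definition norm2 (R : realType) (n : nat) (u : 'cV[R]_n) : R :=
  Num.sqrt (dotp u u).

Definition norm1 (R : realType) (n : nat) (u : 'cV[R]_n) : R :=
  \sum_(i < n) `|u i 0|.

Definition quadf (R : realType) (n : nat) (H : 'M[R]_n) (u : 'cV[R]_n) : R :=
  dotp u (H *m u).

Definition opnorm_le (R : realType) (m n : nat) (A : 'M[R]_(m, n)) (kappa : R) :=
  forall u : 'cV[R]_n, norm2 (A *m u) <= kappa * norm2 u.

Definition convex_set (R : realType) (n : nat) (X : set 'cV[R]_n) :=
  forall x y, X x -> X y -> forall t : R, 0 <= t <= 1 -> X ((1 - t) *: x + t *: y).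

Definition phi (R : realType) (n m : nat) (f : 'cV[R]_n -> R)
  (c : 'cV[R]_n -> 'cV[R]_m) (x : 'cV[R]_n) (tau : R) : R :=
  tau * f x + norm1 (c x).

Definition Dq (R : realType) (n m : nat) (c : 'cV[R]_n -> 'cV[R]_m)
  (x : 'cV[R]_n) (tau : R) (g : 'cV[R]_n) (H : 'M[R]_n) (d : 'cV[R]_n) : R :=
  - tau * (dotp g d + 2^-1 * Num.max (quadf H d) 0) + norm1 (c x).

(* merit parameter update: tau_k from tau_{k-1}.  tau_trial = +oo when
   g^T d + max{d^T H d,0} <= 0, in which case tau_{k-1} <= tau_trial. *)
Definition tau_update (R : realType) (n m : nat) (sigma eps : R) (tau_prev : R)
  (g : 'cV[R]_n) (H : 'M[R]_n) (d : 'cV[R]_n) (cx : 'cV[R]_m) : R :=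
  let den := dotp g d + Num.max (quadf H d) 0 in
  if den <= 0 then tau_prev
  else let trial := (1 - sigma) * norm1 cx / den in
       if tau_prev <= trial then tau_prev else (1 - eps) * trial.

Definition SD (R : realType) (n m : nat) (f : 'cV[R]_n -> R)
  (c : 'cV[R]_n -> 'cV[R]_m) (eta : R) (x : 'cV[R]_n) (tau : R)
  (g : 'cV[R]_n) (H : 'M[R]_n) (d : 'cV[R]_n) (alpha : R) : Prop :=
  phi f c (x + alpha *: d) tau <= phi f c x tau - eta * alpha * Dq c x tau g H d.

(* The common iteration (Section "Common iteration"), for given sequences.
   tau_m1 is tau_{-1}.  gradf is the gradient of f, J x = nabla c(x)^T. *)
Definition common_iteration (R : realType) (n m : nat) (f : 'cV[R]_n -> R)
  (gradf : 'cV[R]_n -> 'cV[R]_n) (c : 'cV[R]_n -> 'cV[R]_m)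
  (J : 'cV[R]_n -> 'M[R]_(m, n)) (sigma eps tau_m1 : R)
  (x d : nat -> 'cV[R]_n) (y : nat -> 'cV[R]_m) (H : nat -> 'M[R]_n)
  (tau alpha : nat -> R) : Prop :=
  forall k : nat,
    [/\ H k *m d k + (J (x k))^T *m y k = - gradf (x k),
        J (x k) *m d k = - c (x k),
        tau k = tau_update sigma eps (if k is k'.+1 then tau k' else tau_m1)
                  (gradf (x k)) (H k) (d k) (c (x k))
      & x k.+1 = x k + alpha k *: d k].

Definition never_stops (R : realType) (n m : nat)
  (gradf : 'cV[R]_n -> 'cV[R]_n) (c : 'cV[R]_n -> 'cV[R]_m)
  (J : 'cV[R]_n -> 'M[R]_(m, n)) (x : nat -> 'cV[R]_n) (y : nat -> 'cV[R]_m) :=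
  forall k, ~ (gradf (x k) + (J (x k))^T *m y k = 0 /\ c (x k) = 0).

Definition matrix_assumption (R : realType) (n m : nat)
  (J : 'cV[R]_n -> 'M[R]_(m, n)) (x : nat -> 'cV[R]_n) (H : nat -> 'M[R]_n)
  (kappaH zeta : R) : Prop :=
  forall k, [/\ (H k)^T = H k, opnorm_le (H k) kappaH
   & forall u : 'cV[R]_n, J (x k) *m u = 0 -> zeta * norm2 u ^+ 2 <= quadf (H k) u].

Definition alpha_A1 (R : realType) (n m : nat) (c : 'cV[R]_n -> 'cV[R]_m)
  (eta : R) (x : 'cV[R]_n) (tau : R) (g : 'cV[R]_n) (H : 'M[R]_n)
  (d : 'cV[R]_n) (Lambda : R) : R :=
  let ahat := 2 * (1 - eta) * Dq c x tau g H d / (Lambda * norm2 d ^+ 2) in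
  let atil := ahat - 4 * norm1 (c x) / (Lambda * norm2 d ^+ 2) in
  if ahat < 1 then ahat else if atil <= 1 then 1 else atil.

Definition LF (R : realType) (n : nat) (f : 'cV[R]_n -> R) (x : 'cV[R]_n)
  (g : 'cV[R]_n) (d : 'cV[R]_n) (L a : R) : Prop :=
  f (x + a *: d) <= f x + a * dotp g d + 2^-1 * L * a ^+ 2 * norm2 d ^+ 2.

(* condition (LC_i);  nabla c_i(x)^T d = (J x *m d)_i *)
Definition LC (R : realType) (n m : nat) (c : 'cV[R]_n -> 'cV[R]_m)
  (J : 'cV[R]_n -> 'M[R]_(m, n)) (x : 'cV[R]_n) (d : 'cV[R]_n) (i : 'I_m)
  (gam a : R) : Prop :=
  `|c (x + a *: d) i 0| <= `|c x i 0 + a * (J x *m d) i 0|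
                           + 2^-1 * gam * a ^+ 2 * norm2 d ^+ 2.

(* Lk k j = L_{k,j}, gk k j i = gamma_{k,i,j}, and the
   inner loop at iteration k accepts at index jk k; then L_k = Lk k (jk k),
   gamma_{k,i} = gk k (jk k) i.  Lm1 = L_{-1}, gm1 i = gamma_{-1,i}. *)
Definition algorithm1 (R : realType) (n m : nat) (f : 'cV[R]_n -> R)
  (gradf : 'cV[R]_n -> 'cV[R]_n) (c : 'cV[R]_n -> 'cV[R]_m)
  (J : 'cV[R]_n -> 'M[R]_(m, n)) (X : set 'cV[R]_n) (eta rho Lm1 : R)
  (gm1 : 'I_m -> R) (x d : nat -> 'cV[R]_n) (H : nat -> 'M[R]_n)
  (tau alpha : nat -> R) : Prop :=
  exists (Lk : nat -> nat -> R) (gk : nat -> nat -> 'I_m -> R) (jk : nat -> nat),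
  forall k : nat,
    let Lprev := if k is k'.+1 then Lk k' (jk k') else Lm1 in
    let gprev i := if k is k'.+1 then gk k' (jk k') i else gm1 i in
    let a j := alpha_A1 c eta (x k) (tau k) (gradf (x k)) (H k) (d k)
                 (tau k * Lk k j + \sum_(i < m) gk k j i) in
    let accept j := SD f c eta (x k) (tau k) (gradf (x k)) (H k) (d k) (a j)
                    \/ (LF f (x k) (gradf (x k)) (d k) (Lk k j) (a j)
                        /\ forall i, LC c J (x k) (d k) i (gk k j i) (a j)) in
    (0 < Lk k 0 <= Lprev) /\
    (forall i, 0 < gk k 0 i <= gprev i) /\
    (forall j, (j <= jk k)%N -> X (x k + a j *: d k)) /\
        (forall j, (j < jk k)%N ->
           [/\ ~ accept j,
               (LF f (x k) (gradf (x k)) (d k) (Lk k j) (a j) -> Lk k j.+1 = Lk k j),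
               (~ LF f (x k) (gradf (x k)) (d k) (Lk k j) (a j) ->
                  Lk k j.+1 = rho * Lk k j),
               (forall i, LC c J (x k) (d k) i (gk k j i) (a j) -> gk k j.+1 i = gk k j i)
             & (forall i, ~ LC c J (x k) (d k) i (gk k j i) (a j) ->
                  gk k j.+1 i = rho * gk k j i)]) /\
    accept (jk k) /\ alpha k = a (jk k).

Definition algorithm2 (R : realType) (n m : nat) (f : 'cV[R]_n -> R)
  (gradf : 'cV[R]_n -> 'cV[R]_n) (c : 'cV[R]_n -> 'cV[R]_m)
  (X : set 'cV[R]_n) (eta nu abar : R)
  (x d : nat -> 'cV[R]_n) (H : nat -> 'M[R]_n) (tau alpha : nat -> R) : Prop :=
  forall k : nat, exists j : nat,
    [/\ alpha k = nu ^+ j * abar,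
        SD f c eta (x k) (tau k) (gradf (x k)) (H k) (d k) (nu ^+ j * abar),
        (forall i, (i < j)%N ->
           ~ SD f c eta (x k) (tau k) (gradf (x k)) (H k) (d k) (nu ^+ i * abar))
      & (forall i, (i <= j)%N -> X (x k + (nu ^+ i * abar) *: d k))].

Definition standing_assumption (R : realType) (n m : nat) (f : 'cV[R]_n -> R)
  (gradf : 'cV[R]_n -> 'cV[R]_n) (c : 'cV[R]_n -> 'cV[R]_m)
  (J : 'cV[R]_n -> 'M[R]_(m, n)) (X : set 'cV[R]_n) (x : nat -> 'cV[R]_n) : Prop :=
  open X /\ convex_set X /\ (forall k, X (x k)) /\
      (* f is C^1 on X with gradient gradf (continuity of gradf: Lipschitz below) *)
      (forall z, X z -> differentiable f z /\ forall v, 'd f z v = dotp (gradf z) v) /\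
      (forall z, X z -> differentiable c z /\ forall v, 'd c z v = J z *m v) /\
      (exists flow : R, forall z, X z -> flow <= f z) /\
      (exists Bg : R, forall z, X z -> norm2 (gradf z) <= Bg) /\
      (exists L : R, forall z w, X z -> X w ->
          norm2 (gradf z - gradf w) <= L * norm2 (z - w)) /\
      (exists Bc : R, forall z, X z -> norm2 (c z) <= Bc) /\
      (exists BJ : R, forall z, X z -> opnorm_le (J z) BJ) /\
      (* nabla c_i is gamma_i-Lipschitz on X; nabla c_i(z) = (row i (J z))^T *)
      (exists gam : 'I_m -> R, forall i z w, X z -> X w ->
          norm2 ((row i (J z))^T - (row i (J w))^T) <= gam i * norm2 (z - w)) /\
      (* singular values of nabla c(z) = (J z)^T bounded away from zero:
         smallest singular value sigma_min((J z)^T) = min_{||v||=1} ||(J z)^T v|| *)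
      (exists s : R, 0 < s /\ forall z, X z -> forall v : 'cV[R]_m,
          s * norm2 v <= norm2 ((J z)^T *m v)).

Set Warnings "-notation-overridden -ambiguous-paths -notation-incompatible-prefix".
From HB Require Import structures.
From Pilot Require Import Defs.
From mathcomp Require Import all_boot all_order all_algebra.
From mathcomp Require Import all_classical all_reals all_analysis.
From mathcomp Require Import ring lra.
Import Order.TTheory GRing.Theory Num.Theory.
Import numFieldNormedType.Exports.
Local Open Scope ring_scope.
Local Open Scope classical_set_scope.
Set Implicit Arguments.
Unset Strict Implicit.
Unset Printing Implicit Defensive.

(* The merit parameter stays bounded away from zero: splitting d_k along the
   null space and the row space of J_k, the Newton system bounds
   g_k^T d_k + max(d_k^T H_k d_k, 0) by a multiple of ||c_k||_1, which keeps
   tau_trial above a constant.  The same splitting gives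
   tau_k ||d_k||^2 <= K Dq_k.  With the Lipschitz upper models of f and |c_i|,
   phi(x_k + a d_k) <= phi(x_k) - a Dq_k + Lambda a^2 ||d_k||^2, so (SD) holds for
   every a <= (1 - eta) tau_min / (K Lambda) and backtracking stops at a step of at
   least nu times this bound.  In Algorithm 1 an estimate L_{k,j} or
   gamma_{k,i,j} is only enlarged while it is below twice the corresponding
   Lipschitz constant, so Lambda_{k,j} stays bounded and the stepsize formula is
   bounded below by the same ratio Dq_k / ||d_k||^2. *)

(** * Euclidean geometry of column vectors *)

Section Euclidean.
Variables (R : realType) (n : nat).
Implicit Types (u v w : 'cV[R]_n).

Lemma dotpC u v : dotp u v = dotp v u.
Proof. by apply: eq_bigr => i _; rewrite mulrC. Qed.

Lemma dotpDl u v w : dotp (u + v) w = dotp u w + dotp v w.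
Proof. by rewrite /dotp -big_split; apply: eq_bigr => i _; rewrite !mxE mulrDl. Qed.

Lemma dotpDr u v w : dotp w (u + v) = dotp w u + dotp w v.
Proof. by rewrite dotpC dotpDl !(dotpC w). Qed.

Lemma dotpZl a u w : dotp (a *: u) w = a * dotp u w.
Proof. by rewrite /dotp mulr_sumr; apply: eq_bigr => i _; rewrite !mxE mulrA. Qed.

Lemma dotpZr a u w : dotp w (a *: u) = a * dotp w u.
Proof. by rewrite dotpC dotpZl dotpC. Qed.

Lemma dotpNl u w : dotp (- u) w = - dotp u w.
Proof. by rewrite -scaleN1r dotpZl mulN1r. Qed.

Lemma dotpNr u w : dotp w (- u) = - dotp w u.
Proof. by rewrite dotpC dotpNl dotpC. Qed.

Lemma dotpBl u v w : dotp (u - v) w = dotp u w - dotp v w.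
Proof. by rewrite dotpDl dotpNl. Qed.

Lemma dotpBr u v w : dotp w (u - v) = dotp w u - dotp w v.
Proof. by rewrite dotpDr dotpNr. Qed.

Lemma dotp0l w : dotp 0 w = 0.
Proof. by rewrite /dotp big1 // => i _; rewrite mxE mul0r. Qed.

Lemma dotp0r w : dotp w 0 = 0.
Proof. by rewrite dotpC dotp0l. Qed.

Lemma dotpp_ge0 u : 0 <= dotp u u.
Proof. by apply: sumr_ge0 => i _; rewrite -expr2 sqr_ge0. Qed.

Lemma dotpp_eq0 u : (dotp u u == 0) = (u == 0).
Proof.
apply/idP/eqP => [|->]; last by rewrite dotp0l.
rewrite psumr_eq0 => [/allP u0|i _]; last by rewrite -expr2 sqr_ge0.
apply/matrixP => i j; rewrite (ord1 j) mxE.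
by apply/eqP; rewrite -sqrf_eq0 expr2 (implyP (u0 i (mem_index_enum _))).
Qed.

Lemma norm2_ge0 u : 0 <= norm2 u.
Proof. exact: sqrtr_ge0. Qed.

Lemma norm2_sqr u : norm2 u ^+ 2 = dotp u u.
Proof. by rewrite sqr_sqrtr // dotpp_ge0. Qed.

Lemma norm2_eq0 u : (norm2 u == 0) = (u == 0).
Proof. by rewrite sqrtr_eq0 le_eqVlt ltNge dotpp_ge0 orbF dotpp_eq0. Qed.

Lemma norm2_gt0 u : (0 < norm2 u) = (u != 0).
Proof. by rewrite lt_neqAle norm2_ge0 andbT eq_sym norm2_eq0. Qed.

Lemma norm20 : norm2 (0 : 'cV[R]_n) = 0.
Proof. by apply/eqP; rewrite norm2_eq0. Qed.

Lemma norm2Z a u : norm2 (a *: u) = `|a| * norm2 u.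
Proof. by rewrite /norm2 dotpZl dotpZr mulrA -expr2 sqrtrM ?sqr_ge0 // sqrtr_sqr. Qed.

Lemma norm2N u : norm2 (- u) = norm2 u.
Proof. by rewrite -scaleN1r norm2Z normrN normr1 mul1r. Qed.

Lemma norm2Z_sqr a u : norm2 (a *: u) ^+ 2 = a ^+ 2 * norm2 u ^+ 2.
Proof. by rewrite norm2Z exprMn real_normK // num_real. Qed.

Lemma cauchy_schwarz u v : dotp u v <= norm2 u * norm2 v.
Proof.
have [->|u0] := eqVneq u 0; first by rewrite dotp0l norm20 mul0r.
have [->|v0] := eqVneq v 0; first by rewrite dotp0r norm20 mulr0.
have ua : 0 < norm2 u by rewrite norm2_gt0.
have va : 0 < norm2 v by rewrite norm2_gt0.
have := dotpp_ge0 (norm2 v *: u - norm2 u *: v).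
rewrite !dotpBl !dotpBr !dotpZl !dotpZr -!norm2_sqr (dotpC v u) => h.
rewrite -subr_ge0 -(pmulr_rge0 _ (mulr_gt0 ua va)); nra.
Qed.

Lemma ler_norm_dotp u v : `|dotp u v| <= norm2 u * norm2 v.
Proof.
by rewrite ler_norml cauchy_schwarz andbT lerNl -dotpNr -(norm2N v) cauchy_schwarz.
Qed.

Lemma ler_norm2D u v : norm2 (u + v) <= norm2 u + norm2 v.
Proof.
rewrite -ler_sqr ?nnegrE ?addr_ge0 ?norm2_ge0 // norm2_sqr.
rewrite dotpDl !dotpDr -!norm2_sqr (dotpC v u); have := cauchy_schwarz u v; lra.
Qed.

Lemma norm2D_sqr_le u v : norm2 (u + v) ^+ 2 <= 2 * norm2 u ^+ 2 + 2 * norm2 v ^+ 2.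
Proof.
rewrite !norm2_sqr dotpDl !dotpDr (dotpC v u).
by have := dotpp_ge0 (u - v); rewrite dotpBl !dotpBr (dotpC v u); lra.
Qed.

Lemma ler_coord_norm2 u i : `|u i 0| <= norm2 u.
Proof.
rewrite -sqrtr_sqr ler_sqrt ?dotpp_ge0 // /dotp (bigD1 i) //= -expr2 lerDl.
by apply: sumr_ge0 => j _; rewrite -expr2 sqr_ge0.
Qed.

Lemma norm1_ge0 u : 0 <= norm1 u.
Proof. exact: sumr_ge0. Qed.

Lemma ler_coord_norm1 u i : `|u i 0| <= norm1 u.
Proof. by rewrite /norm1 (bigD1 i) //= lerDl; apply: sumr_ge0. Qed.

Lemma dotp_le_norm1 u v : dotp u v <= norm1 u * norm2 v.
Proof.
rewrite /dotp /norm1 mulr_suml; apply: ler_sum => i _.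
by rewrite (le_trans (ler_norm _)) // normrM ler_wpM2l ?ler_coord_norm2.
Qed.

Lemma norm2_le_norm1 u : norm2 u <= norm1 u.
Proof.
rewrite -ler_sqr ?nnegrE ?norm2_ge0 ?norm1_ge0 // norm2_sqr expr2.
rewrite [X in _ <= X * _]/norm1 mulr_suml; apply: ler_sum => i _.
by rewrite (le_trans (ler_norm _)) // normrM ler_wpM2l ?ler_coord_norm1.
Qed.
End Euclidean.

Section Matrices.
Variable R : realType.

Lemma dotp_trmx m n (A : 'M[R]_(m, n)) u w : dotp u (A^T *m w) = dotp (A *m u) w.
Proof.
rewrite /dotp; under eq_bigr do rewrite mxE big_distrr.
rewrite exchange_big; apply: eq_bigr => i _; rewrite mxE big_distrl.
by apply: eq_bigr => j _; rewrite !mxE /=; ring.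
Qed.

Lemma ler_norm_dotp_mul n (A : 'M[R]_n) k u v :
  opnorm_le A k -> `|dotp u (A *m v)| <= k * norm2 u * norm2 v.
Proof.
move=> Ak; rewrite (le_trans (ler_norm_dotp _ _)) // mulrAC [X in _ <= X]mulrC.
by rewrite ler_wpM2l ?norm2_ge0 ?Ak.
Qed.

Lemma coord_mulmx_row m n (A : 'M[R]_(m, n)) i h : dotp (row i A)^T h = (A *m h) i 0.
Proof. by rewrite mxE; apply: eq_bigr => k _; rewrite !mxE. Qed.

Lemma mulmx_trmx_unit m n (A : 'M[R]_(m, n)) s :
  0 < s -> (forall w, s * norm2 w <= norm2 (A^T *m w)) -> A *m A^T \in unitmx.
Proof.
move=> s0 As; rewrite -row_free_unit; apply: inj_row_free => w wAA0.
have AAw0 : A *m (A^T *m w^T) = 0.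
  by rewrite mulmxA -[A *m A^T]trmxK trmx_mul !trmxK -trmx_mul wAA0 trmx0.
have : norm2 (A^T *m w^T) == 0.
  by rewrite norm2_eq0 -dotpp_eq0 -{1}[A]trmxK dotp_trmx trmxK AAw0 dotp0l.
move/eqP=> Aw0; apply: trmx_inj; apply/eqP; rewrite trmx0 -norm2_eq0 eq_le norm2_ge0.
by rewrite -(pmulr_rle0 _ s0) (le_trans (As _)) // Aw0.
Qed.

(* [v] is the least-norm solution [A^T (A A^T)^-1 A d] of [A v = A d]. *)
Lemma range_space_split m n (A : 'M[R]_(m, n)) s (d : 'cV[R]_n) :
  0 < s -> (forall w, s * norm2 w <= norm2 (A^T *m w)) ->
  exists2 v, A *m (d - v) = 0 & s * norm2 v <= norm2 (A *m d).
Proof.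
move=> s0 As; have AAu := mulmx_trmx_unit s0 As.
set w := invmx (A *m A^T) *m (A *m d).
have Av : A *m (A^T *m w) = A *m d by rewrite mulmxA mulKVmx.
exists (A^T *m w); first by rewrite mulmxBr Av subrr.
have [->|v0] := eqVneq (A^T *m w) 0; first by rewrite norm20 mulr0 norm2_ge0.
have vpos : 0 < norm2 (A^T *m w) by rewrite norm2_gt0.
rewrite -(ler_pM2r vpos).
have vw : norm2 (A^T *m w) ^+ 2 <= norm2 (A *m d) * norm2 w.
  by rewrite norm2_sqr dotp_trmx Av cauchy_schwarz.
have := As w; have := norm2_ge0 (A *m d); nra.
Qed.
End Matrices.

(** * Bounds on the Newton step *)

Section NewtonStep.
Variables (R : realType) (m n : nat) (kH ze s Bg Bc : R).
Hypotheses (kH_gt0 : 0 < kH) (ze_gt0 : 0 < ze) (s_gt0 : 0 < s).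
Variables (Hm : 'M[R]_n) (Jm : 'M[R]_(m, n)) (g d u v : 'cV[R]_n) (y cv : 'cV[R]_m).
Hypotheses (newton_dual : Hm *m d + Jm^T *m y = - g) (newton_primal : Jm *m d = - cv).
Hypotheses (Hm_bound : opnorm_le Hm kH)
  (Hm_curv : forall w, Jm *m w = 0 -> ze * norm2 w ^+ 2 <= quadf Hm w).
Hypotheses (g_bound : norm2 g <= Bg) (cv_bound : norm2 cv <= Bc).
Hypotheses (d_split : d = u + v) (u_null : Jm *m u = 0) (v_bound : s * norm2 v <= norm2 cv).

Lemma range_part_le : norm2 v <= Bc / s.
Proof. by rewrite ler_pdivlMr // mulrC (le_trans v_bound). Qed.

Lemma range_part_sqr_le : norm2 v ^+ 2 <= Bc / s ^+ 2 * norm1 cv.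
Proof.
have cv0 := norm2_ge0 cv; have sv0 := mulr_ge0 (ltW s_gt0) (norm2_ge0 v).
rewrite mulrAC ler_pdivlMr ?exprn_gt0 // mulrC -exprMn.
apply: (le_trans (_ : _ <= norm2 cv ^+ 2)); first by rewrite ler_sqr ?nnegrE.
by rewrite expr2 ler_pM ?norm2_le_norm1.
Qed.

Lemma quadf_split_ge :
  ze / 2 * norm2 u ^+ 2 - (kH + 2 * kH ^+ 2 / ze) * norm2 v ^+ 2 <= quadf Hm d.
Proof.
have quv (p q : 'cV[R]_n) : - (kH * norm2 p * norm2 q) <= dotp p (Hm *m q).
  by have := ler_norm_dotp_mul p q Hm_bound; rewrite ler_norml => /andP[].
have young : 2 * kH * norm2 u * norm2 v
    <= ze / 2 * norm2 u ^+ 2 + 2 * kH ^+ 2 / ze * norm2 v ^+ 2.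
  rewrite -subr_ge0; set a := norm2 u; set b := norm2 v.
  have -> : ze / 2 * a ^+ 2 + 2 * kH ^+ 2 / ze * b ^+ 2 - 2 * kH * a * b
      = (ze * a - 2 * kH * b) ^+ 2 / (2 * ze) by field; rewrite gt_eqF.
  by rewrite divr_ge0 ?sqr_ge0 // mulr_ge0 // ltW.
have := Hm_curv u_null; have := quv u v; have := quv v u; have := quv v v.
rewrite -[kH * _ * norm2 v]mulrA -expr2 [kH * norm2 v * _]mulrAC.
rewrite /quadf d_split mulmxDr !dotpDl !dotpDr.
set a := norm2 u in young *; set b := norm2 v in young *; lra.
Qed.

Lemma null_part_le : norm2 u <= (Bg + kH * (Bc / s)) / ze.
Proof.
have Bg0 := le_trans (norm2_ge0 g) g_bound; have Bc0 := le_trans (norm2_ge0 cv) cv_bound.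
have [->|u0] := eqVneq u 0.
  rewrite norm20; apply: divr_ge0 (ltW ze_gt0).
  exact: addr_ge0 Bg0 (mulr_ge0 (ltW kH_gt0) (divr_ge0 Bc0 (ltW s_gt0))).
have upos : 0 < norm2 u by rewrite norm2_gt0.
have Hu : Hm *m u = - g - Jm^T *m y - Hm *m v.
  by rewrite -newton_dual addrK d_split mulmxDr addrK.
have uHu := Hm_curv u_null.
rewrite /quadf Hu !dotpBr dotpNr dotp_trmx u_null dotp0l subr0 in uHu.
have ug : - dotp u g <= norm2 u * Bg.
  by rewrite -dotpNr (le_trans (cauchy_schwarz _ _)) // norm2N ler_wpM2l ?norm2_ge0.
have := ler_norm_dotp_mul u v Hm_bound; rewrite ler_norml => /andP[uHv _].
have uvb : kH * norm2 u * norm2 v <= kH * norm2 u * (Bc / s).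
  by rewrite ler_wpM2l ?range_part_le // mulr_ge0 ?norm2_ge0 ?ltW.
rewrite ler_pdivlMr // -(ler_pM2l upos); lra.
Qed.

Lemma dotp_grad_step : dotp g d = dotp cv y - quadf Hm d.
Proof.
have -> : g = - (Hm *m d + Jm^T *m y) by rewrite newton_dual opprK.
rewrite dotpNl dotpDl (dotpC (Jm^T *m y)) dotp_trmx newton_primal dotpNl /quadf.
by rewrite (dotpC (Hm *m d)) opprD opprK addrC.
Qed.

Lemma step_objective_le :
  dotp g d + Num.max (quadf Hm d) 0
    <= norm1 cv * norm2 y + (kH + 2 * kH ^+ 2 / ze) * norm2 v ^+ 2.
Proof.
have := quadf_split_ge; have := dotp_le_norm1 cv y.
have : 0 <= ze / 2 * norm2 u ^+ 2 by rewrite mulr_ge0 ?sqr_ge0 ?divr_ge0 ?ltW.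
have : 0 <= (kH + 2 * kH ^+ 2 / ze) * norm2 v ^+ 2.
  by rewrite mulr_ge0 ?sqr_ge0 ?addr_ge0 ?divr_ge0 ?mulr_ge0 ?sqr_ge0 ?ltW.
rewrite dotp_grad_step; case: (leP (quadf Hm d) 0) => _; lra.
Qed.

Lemma step_sqr_le :
  norm2 d ^+ 2 <= 4 / ze * Num.max (quadf Hm d) 0
                  + (4 * (kH + 2 * kH ^+ 2 / ze) / ze + 2) * norm2 v ^+ 2.
Proof.
set C := kH + 2 * kH ^+ 2 / ze; set M := Num.max (quadf Hm d) 0.
have qM : quadf Hm d <= M by rewrite le_max lexx.
have u2 : norm2 u ^+ 2 <= 2 / ze * (M + C * norm2 v ^+ 2).
  have -> : norm2 u ^+ 2 = 2 / ze * (ze / 2 * norm2 u ^+ 2) by field; rewrite gt_eqF.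
  apply: ler_wpM2l; first by rewrite divr_ge0 ?ltW.
  by have := quadf_split_ge; rewrite -/C; lra.
have := norm2D_sqr_le u v; rewrite -d_split.
have -> : 4 / ze * M + (4 * C / ze + 2) * norm2 v ^+ 2
    = 2 * (2 / ze * (M + C * norm2 v ^+ 2)) + 2 * norm2 v ^+ 2 by ring.
lra.
Qed.

Hypothesis Jm_sing : forall w, s * norm2 w <= norm2 (Jm^T *m w).

Lemma multiplier_le : s * norm2 y <= Bg + kH * (norm2 u + norm2 v).
Proof.
apply: (le_trans (Jm_sing y)).
have -> : Jm^T *m y = - g - Hm *m d by rewrite -newton_dual addrAC subrr add0r.
apply: (le_trans (ler_norm2D _ _)); rewrite !norm2N.
apply: lerD => //; apply: (le_trans (Hm_bound d)); apply: ler_wpM2l; first exact: ltW.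
by rewrite d_split ler_norm2D.
Qed.
End NewtonStep.

Lemma newton_step_bounds (R : realType) (m n : nat) (kH ze s Bg Bc : R) :
  0 < kH -> 0 < ze -> 0 < s -> 0 <= Bg -> 0 <= Bc ->
  exists2 Cd, 0 < Cd & exists2 Cn, 0 <= Cn &
  forall (Hm : 'M[R]_n) (Jm : 'M[R]_(m, n)) (g d : 'cV[R]_n) (y cv : 'cV[R]_m),
    Hm *m d + Jm^T *m y = - g -> Jm *m d = - cv -> opnorm_le Hm kH ->
    (forall w, Jm *m w = 0 -> ze * norm2 w ^+ 2 <= quadf Hm w) ->
    (forall w, s * norm2 w <= norm2 (Jm^T *m w)) -> norm2 g <= Bg -> norm2 cv <= Bc ->
    dotp g d + Num.max (quadf Hm d) 0 <= Cd * norm1 cv /\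
    norm2 d ^+ 2 <= 4 / ze * Num.max (quadf Hm d) 0 + Cn * norm1 cv.
Proof.
move=> kH0 ze0 s0 Bg0 Bc0.
pose C := kH + 2 * kH ^+ 2 / ze.
pose Cv := Bc / s ^+ 2.
pose Ymax := (Bg + kH * ((Bg + kH * (Bc / s)) / ze + Bc / s)) / s.
have kH0' := ltW kH0; have ze0' := ltW ze0; have s0' := ltW s0.
have C0 : 0 <= C.
  by apply: addr_ge0 => //; apply: divr_ge0 => //; apply: mulr_ge0 => //; apply: sqr_ge0.
have Cv0 : 0 <= Cv by apply: divr_ge0 => //; apply: sqr_ge0.
have Bcs0 : 0 <= Bc / s by apply: divr_ge0.
have Ymax0 : 0 <= Ymax.
  apply: divr_ge0 => //; apply: addr_ge0 => //; apply: mulr_ge0 => //.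
  by apply: addr_ge0 => //; apply: divr_ge0 => //; apply: addr_ge0 => //; apply: mulr_ge0.
exists (Ymax + C * Cv + 1); first by have := mulr_ge0 C0 Cv0; lra.
exists ((4 * C / ze + 2) * Cv) => [|Hm Jm g d y cv dual primal Hb Hc Js gb cb].
  by apply: mulr_ge0 => //; apply: addr_ge0 => //; apply: divr_ge0 => //; apply: mulr_ge0.
have [v null vb] := range_space_split d s0 Js.
rewrite primal norm2N in vb.
have dE : d = (d - v) + v by rewrite subrK.
have v2 := range_part_sqr_le s0 cb vb.
have yb : norm2 y <= Ymax.
  rewrite ler_pdivlMr // mulrC (le_trans (multiplier_le kH0 dual Hb gb dE Js)) //.
  rewrite lerD2l; apply: ler_wpM2l => //; apply: lerD.
  - exact: (null_part_le kH0 ze0 s0 dual Hb Hc gb cb dE null vb).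
  - exact: (range_part_le s0 cb vb).
split.
  apply: (le_trans (step_objective_le kH0 ze0 dual primal Hb Hc dE null)).
  have : norm1 cv * norm2 y <= norm1 cv * Ymax by rewrite ler_wpM2l ?norm1_ge0.
  have : C * norm2 v ^+ 2 <= C * (Cv * norm1 cv) by rewrite ler_wpM2l.
  have := norm1_ge0 cv; rewrite /C; nra.
apply: (le_trans (step_sqr_le ze0 Hb Hc dE null)).
rewrite lerD2l -/C -[(_ + 2) * Cv * _]mulrA; apply: ler_wpM2l => //.
by apply: addr_ge0 => //; apply: divr_ge0 => //; apply: mulr_ge0.
Qed.

(** * Taylor bounds from Lipschitz derivatives *)

Section MeanValue.
Variables (R : realType) (n : nat) (X : set 'cV[R]_n).
Hypothesis convX : Defs.convex_set X.

Lemma convex_segment z h t : X z -> X (z + h) -> 0 <= t <= 1 -> X (t *: h + z).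
Proof.
move=> Xz Xzh t01; have := convX Xz Xzh t01.
by congr X; apply/matrixP => i j; rewrite !mxE; ring.
Qed.

Lemma affine_line_diff (h z : 'cV[R]_n) (t : R) :
  differentiable (fun s : R => s *: h + z) t /\ 'd (fun s : R => s *: h + z) t 1 = h.
Proof.
have -> : (fun s : R => s *: h + z) = ( *:%R^~ h) + cst z by [].
have Dsh : differentiable (( *:%R^~ h) : R -> 'cV[R]_n) t.
  exact: (@ex_diff _ _ _ _ _ _ _ (is_diff_scalel t h)).
have dsh : 'd ( *:%R^~ h) t = *:%R^~ h :> (R -> 'cV[R]_n).
  exact: (@diff_val _ _ _ _ _ _ _ (is_diff_scalel t h)).
have Dz : differentiable (cst z : R -> 'cV[R]_n) t by apply: differentiable_cst.
split; first exact: differentiableD.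
rewrite diffD // [in X in X + _ = _]dsh (@diff_cst R R _ z t).
by rewrite /= scale1r addr0.
Qed.

Variables (F : 'cV[R]_n -> R) (G : 'cV[R]_n -> 'cV[R]_n).
Hypothesis F_grad : forall w, X w -> differentiable F w /\ forall v, 'd F w v = dotp (G w) v.

Lemma mean_value_segment z h : X z -> X (z + h) ->
  exists2 t, 0 <= t <= 1 & F (z + h) - F z = dotp (G (t *: h + z)) h.
Proof.
move=> Xz Xzh; pose p (s : R) := s *: h + z.
have Xp t : 0 <= t <= 1 -> X (p t) by exact: convex_segment.
have Dphi t : 0 <= t <= 1 -> derivable (F \o p) t 1 /\ 'D_1 (F \o p) t = dotp (G (p t)) h.
  move=> t01; have [dF FG] := F_grad (Xp t t01); have [dp ph] := affine_line_diff h z t.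
  have dphi : differentiable (F \o p) t by apply: differentiable_comp.
  split; first exact: diff_derivable.
  by rewrite deriveE // diff_comp //= ph FG.
have cphi : {within `[0, 1], continuous (F \o p)}.
  by apply: derivable_within_continuous => t; rewrite in_itv /= => /Dphi[].
have phi' (t : R) : t \in `]0, 1[%R -> is_derive t 1 (F \o p) (dotp (G (p t)) h).
  rewrite in_itv /= => /andP[t0 t1].
  have [Dt <-] := Dphi t (introT andP (conj (ltW t0) (ltW t1))).
  exact: DeriveDef.
have [t t01 mvt] := MVT_segment ler01 phi' cphi.
exists t; first by move: t01; rewrite in_itv.
by move: mvt; rewrite subr0 mulr1 /= /p scale1r scale0r add0r (addrC h z).
Qed.

Lemma lipschitz_grad_taylor Lc z h : 0 <= Lc ->
  (forall w w', X w -> X w' -> norm2 (G w - G w') <= Lc * norm2 (w - w')) ->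
  X z -> X (z + h) -> `|F (z + h) - F z - dotp (G z) h| <= Lc * norm2 h ^+ 2.
Proof.
move=> Lc0 G_lip Xz Xzh; have [t /andP[t0 t1] ->] := mean_value_segment Xz Xzh.
rewrite -dotpBl (le_trans (ler_norm_dotp _ _)) // expr2 mulrA ler_wpM2r ?norm2_ge0 //.
apply: (le_trans (G_lip _ _ (convex_segment Xz Xzh (introT andP (conj t0 t1))) Xz)).
by rewrite addrK norm2Z ger0_norm // ler_wpM2l // ler_piMl ?norm2_ge0.
Qed.

Lemma lipschitz_grad_upper Lc z h : 0 <= Lc ->
  (forall w w', X w -> X w' -> norm2 (G w - G w') <= Lc * norm2 (w - w')) ->
  X z -> X (z + h) -> F (z + h) <= F z + dotp (G z) h + Lc * norm2 h ^+ 2.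
Proof.
move=> Lc0 G_lip Xz Xzh.
by have /ler_normlW := lipschitz_grad_taylor Lc0 G_lip Xz Xzh; lra.
Qed.
End MeanValue.

Lemma diff_mx_coord (R : realType) (m n : nat) (M : 'M[R]_(m, n)) i j :
  'd (fun N : 'M[R]_(m, n) => N i j) M = (fun N : 'M[R]_(m, n) => N i j) :> (_ -> R).
Proof.
have coord_lin : linear (fun N : 'M[R]_(m, n) => N i j) by move=> a u v; rewrite !mxE.
pose coordL : {linear 'M[R]_(m, n) -> R} :=
  HB.pack (fun N : 'M[R]_(m, n) => N i j) (GRing.isLinear.Build _ _ _ _ _ coord_lin).
by apply: (diff_lin (f := coordL)); exact: coord_continuous.
Qed.

Lemma component_grad (R : realType) (m n : nat) (c : 'cV[R]_n -> 'cV[R]_m)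
  (J : 'cV[R]_n -> 'M[R]_(m, n)) (i : 'I_m) (w : 'cV[R]_n) :
  differentiable c w -> (forall v, 'd c w v = J w *m v) ->
  differentiable (fun z => c z i 0) w /\
  forall v, 'd (fun z => c z i 0) w v = dotp (row i (J w))^T v.
Proof.
move=> dc cJ; have -> : (fun z => c z i 0) = (fun N : 'cV[R]_m => N i 0) \o c by [].
split; first by apply: differentiable_comp => //; apply: differentiable_coord.
move=> v; rewrite diff_comp //; last exact: differentiable_coord.
by rewrite /= diff_mx_coord cJ coord_mulmx_row.
Qed.

Lemma lipschitz_component_upper (R : realType) (m n : nat) (X : set 'cV[R]_n)
  (c : 'cV[R]_n -> 'cV[R]_m) (J : 'cV[R]_n -> 'M[R]_(m, n)) (i : 'I_m) (gam : R) z h :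
  Defs.convex_set X -> (forall w, X w -> differentiable c w /\ forall v, 'd c w v = J w *m v) ->
  0 <= gam ->
  (forall w w', X w -> X w' ->
     norm2 ((row i (J w))^T - (row i (J w'))^T) <= gam * norm2 (w - w')) ->
  X z -> X (z + h) ->
  `|c (z + h) i 0| <= `|c z i 0 + (J z *m h) i 0| + gam * norm2 h ^+ 2.
Proof.
move=> convX c_diff gam0 J_lip Xz Xzh.
have ci_grad w : X w -> _ := fun Xw => component_grad i (c_diff w Xw).1 (c_diff w Xw).2.
have := lipschitz_grad_taylor convX ci_grad gam0 J_lip Xz Xzh.
rewrite coord_mulmx_row => taylor.
have := ler_normD (c (z + h) i 0 - (c z i 0 + (J z *m h) i 0)) (c z i 0 + (J z *m h) i 0).
rewrite subrK opprD addrA; lra.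
Qed.

(** * Merit parameter and stepsize rules *)

Section MeritParameter.
Variables (R : realType) (n m : nat) (sigma eps tp : R).
Hypotheses (sigma01 : 0 < sigma < 1) (eps01 : 0 < eps < 1) (tp_gt0 : 0 < tp).
Variables (g d : 'cV[R]_n) (H : 'M[R]_n) (cx : 'cV[R]_m).

Lemma tau_update_le : tau_update sigma eps tp g H d cx <= tp.
Proof.
rewrite /tau_update; case: ifP => // /negbT; rewrite -ltNge => den0.
case: ifP => // /negbT; rewrite -ltNge => /ltW; apply: le_trans.
have [[_ s1] [e0 _]] := (andP sigma01, andP eps01).
apply: ler_piMl; last by rewrite gerBl ltW.
by apply: divr_ge0 (ltW den0); rewrite mulr_ge0 ?norm1_ge0 // subr_ge0 ltW.
Qed.

Lemma tau_update_ge Cd : 0 < Cd ->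
  dotp g d + Num.max (quadf H d) 0 <= Cd * norm1 cx ->
  Num.min tp ((1 - eps) * (1 - sigma) / Cd) <= tau_update sigma eps tp g H d cx.
Proof.
move=> Cd0 denC; rewrite /tau_update; case: ifP => [_|/negbT]; first by rewrite ge_min lexx.
rewrite -ltNge => den0; case: ifP => _; first by rewrite ge_min lexx.
rewrite ge_min -[(1 - eps) * _ / Cd]mulrA; apply/orP; right; apply: ler_wpM2l.
  by rewrite subr_ge0; case/andP: eps01 => _ /ltW.
rewrite -mulrA; apply: ler_wpM2l; first by rewrite subr_ge0; case/andP: sigma01 => _ /ltW.
by rewrite ler_pdivlMr // mulrC ler_pdivrMr // mulrC.
Qed.

Lemma tau_update_den_le :
  tau_update sigma eps tp g H d cx * (dotp g d + Num.max (quadf H d) 0)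
    <= (1 - sigma) * norm1 cx.
Proof.
have [[_ s1] [e0 _]] := (andP sigma01, andP eps01).
have c1 : 0 <= (1 - sigma) * norm1 cx by rewrite mulr_ge0 ?norm1_ge0 // subr_ge0 ltW.
rewrite /tau_update; case: ifP => [den0|/negbT].
  by apply: le_trans c1; rewrite pmulr_rle0.
rewrite -ltNge => den0; case: ifP => [tptr|_]; first by rewrite -ler_pdivlMr.
by rewrite -[(1 - eps) * _ * _]mulrA divfK ?gt_eqF // ler_piMl // gerBl ltW.
Qed.
End MeritParameter.

Lemma model_reduction_ge (R : realType) (n m : nat) (c : 'cV[R]_n -> 'cV[R]_m)
  (sigma t : R) (x g d : 'cV[R]_n) (H : 'M[R]_n) :
  0 <= t -> t * (dotp g d + Num.max (quadf H d) 0) <= (1 - sigma) * norm1 (c x) ->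
  sigma * norm1 (c x) + t / 2 * Num.max (quadf H d) 0 <= Dq c x t g H d.
Proof. by rewrite /Dq => t0; rewrite mulrDr mulNr mulrDr; lra. Qed.

Lemma phi_step_le (R : realType) (n m : nat) (f : 'cV[R]_n -> R) (c : 'cV[R]_n -> 'cV[R]_m)
  (Jx : 'M[R]_(m, n)) (Lf : R) (gam : 'I_m -> R) (x d g : 'cV[R]_n) (H : 'M[R]_n) (tau a : R) :
  0 <= tau -> 0 <= a <= 1 -> Jx *m d = - c x ->
  f (x + a *: d) <= f x + a * dotp g d + Lf * (a ^+ 2 * norm2 d ^+ 2) ->
  (forall i, `|c (x + a *: d) i 0| <= `|c x i 0 + a * (Jx *m d) i 0|
                                     + gam i * (a ^+ 2 * norm2 d ^+ 2)) ->
  phi f c (x + a *: d) tau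
    <= phi f c x tau - a * Dq c x tau g H d + (tau * Lf + \sum_i gam i) * (a ^+ 2 * norm2 d ^+ 2).
Proof.
move=> tau0 /andP[a0 a1] Jd f_up c_up; set Q := a ^+ 2 * norm2 d ^+ 2.
(* the linearised constraint [c x + a J d] is [(1 - a) c x] *)
have c_up1 : norm1 (c (x + a *: d)) <= (1 - a) * norm1 (c x) + (\sum_i gam i) * Q.
  rewrite /norm1 mulr_sumr mulr_suml -big_split; apply: ler_sum => i _.
  rewrite (le_trans (c_up i)) // Jd mxE.
  have -> : c x i 0 + a * - c x i 0 = (1 - a) * c x i 0 by ring.
  by rewrite normrM ger0_norm ?subr_ge0.
have f_up' : tau * f (x + a *: d) <= tau * (f x + a * dotp g d + Lf * Q) by rewrite ler_wpM2l.
have M0 : 0 <= Num.max (quadf H d) 0 by rewrite le_max lexx orbT.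
have := mulr_ge0 (mulr_ge0 a0 tau0) M0.
have := mulr_ge0 tau0 (mulr_ge0 (sqr_ge0 a) (sqr_ge0 (norm2 d))).
rewrite /phi /Dq; lra.
Qed.

Lemma alpha_A1_ge (R : realType) (n m : nat) (c : 'cV[R]_n -> 'cV[R]_m) (eta : R)
  (x : 'cV[R]_n) (tau : R) (g : 'cV[R]_n) (H : 'M[R]_n) (d : 'cV[R]_n) (Lam b : R) :
  b <= 1 -> b <= 2 * (1 - eta) * Dq c x tau g H d / (Lam * norm2 d ^+ 2) ->
  b <= alpha_A1 c eta x tau g H d Lam.
Proof.
move=> b1 b2; rewrite /alpha_A1; case: ifP => // _.
by case: ifP => // /negbT; rewrite -ltNge => /ltW; apply: le_trans.
Qed.

Lemma backtracking_ge (R : realType) (nu abar beta : R) (j : nat) :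
  0 < nu -> (forall i, (i < j)%N -> beta < nu ^+ i * abar) ->
  Num.min abar (nu * beta) <= nu ^+ j * abar.
Proof.
move=> nu0; case: j => [_|j /(_ j (ltnSn j)) /ltW beta_le]; first by rewrite mul1r ge_min lexx.
by rewrite exprS -mulrA ge_min (ler_wpM2l (ltW nu0) beta_le) orbT.
Qed.

Lemma safeguarded_estimate_bounded (R : realType) (rho T B : R) (p : nat -> nat -> R)
  (N : nat -> nat) :
  0 < rho ->
  (forall k, 0 < p k 0 <= (if k is k'.+1 then p k' (N k') else B)) ->
  (forall k j, (j < N k)%N -> p k j.+1 = p k j \/ p k j < T /\ p k j.+1 = rho * p k j) ->
  forall k j, (j <= N k)%N -> 0 < p k j <= Num.max B (rho * T).
Proof.
move=> rho0 p0 pS.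
have inner k : p k 0 <= Num.max B (rho * T) ->
    forall j, (j <= N k)%N -> 0 < p k j <= Num.max B (rho * T).
  move=> pk0; elim=> [_|j IHj jN]; first by rewrite pk0 andbT; case/andP: (p0 k).
  have /andP[pj0 pjB] := IHj (ltnW jN).
  case: (pS k j jN) => [->|[pjT ->]]; first by rewrite pj0.
  by rewrite mulr_gt0 //= le_max ler_pM2l // (ltW pjT) orbT.
elim=> [|k IHk]; apply: inner.
  by case/andP: (p0 0%N) => _ /le_trans; apply; rewrite le_max lexx.
by case/andP: (p0 k.+1) => _ /le_trans; apply; case/andP: (IHk _ (leqnn (N k))).
Qed.

(** * Uniform lower bound on the stepsizes *)

Section Iteration.
Variables (R : realType) (n m : nat) (f : 'cV[R]_n -> R) (gradf : 'cV[R]_n -> 'cV[R]_n)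
  (c : 'cV[R]_n -> 'cV[R]_m) (J : 'cV[R]_n -> 'M[R]_(m, n)) (X : set 'cV[R]_n).
Variables (sigma eps eta tau_m1 ze Cd Cn : R).
Hypotheses (sigma01 : 0 < sigma < 1) (eps01 : 0 < eps < 1) (eta01 : 0 < eta < 1).
Hypotheses (tau_m1_gt0 : 0 < tau_m1) (ze_gt0 : 0 < ze) (Cd_gt0 : 0 < Cd) (Cn_ge0 : 0 <= Cn).
Variables (x d : nat -> 'cV[R]_n) (y : nat -> 'cV[R]_m) (H : nat -> 'M[R]_n)
  (tau alpha : nat -> R).
Hypotheses (CI : common_iteration f gradf c J sigma eps tau_m1 x d y H tau alpha)
  (NS : never_stops gradf c J x y).

Local Notation M k := (Num.max (quadf (H k) (d k)) 0).
Local Notation Dq_k k := (Dq c (x k) (tau k) (gradf (x k)) (H k) (d k)).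

Hypothesis step_bounds : forall k,
  dotp (gradf (x k)) (d k) + M k <= Cd * norm1 (c (x k)) /\
  norm2 (d k) ^+ 2 <= 4 / ze * M k + Cn * norm1 (c (x k)).

Definition tau_min := Num.min tau_m1 ((1 - eps) * (1 - sigma) / Cd).

Lemma tau_min_gt0 : 0 < tau_min.
Proof.
have [[_ s1] [_ e1]] := (andP sigma01, andP eps01).
by rewrite lt_min tau_m1_gt0 divr_gt0 // mulr_gt0 // subr_gt0.
Qed.

Lemma tau_bounds k : tau_min <= tau k <= tau_m1.
Proof.
suff step j t : tau_min <= t <= tau_m1 ->
    tau j = tau_update sigma eps t (gradf (x j)) (H j) (d j) (c (x j)) ->
    tau_min <= tau j <= tau_m1.
  elim: k => [|k IHk]; [have [_ _ tauE _] := CI 0%N | have [_ _ tauE _] := CI k.+1].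
    by apply: step tauE; rewrite ge_min !lexx.
  exact: step tauE.
move=> /andP[t_lo t_hi] ->.
rewrite (le_trans (tau_update_le _ sigma01 eps01 _ _ _ _)) // andbT.
apply: le_trans (tau_update_ge _ sigma01 eps01 Cd_gt0 (step_bounds j).1).
by rewrite le_min t_lo ge_min lexx orbT.
Qed.

Lemma tau_gt0 k : 0 < tau k.
Proof. by case/andP: (tau_bounds k) => /(lt_le_trans tau_min_gt0). Qed.

Lemma Dq_ge_model k : sigma * norm1 (c (x k)) + tau k / 2 * M k <= Dq_k k.
Proof.
have [_ _ tauE _] := CI k.
have tp0 : 0 < (if k is k'.+1 then tau k' else tau_m1) by case: k {tauE} => // k; exact: tau_gt0.
apply: model_reduction_ge; first exact: ltW (tau_gt0 k).
by rewrite tauE; apply: tau_update_den_le sigma01 eps01 tp0 _ _ _ _.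
Qed.

Lemma Dq_ge0 k : 0 <= Dq_k k.
Proof.
apply: le_trans (Dq_ge_model k); have M0 : 0 <= M k by rewrite le_max lexx orbT.
have [s0 _] := andP sigma01.
have := mulr_ge0 (ltW s0) (norm1_ge0 (c (x k))).
have := mulr_ge0 (divr_ge0 (ltW (tau_gt0 k)) (ler0n _ 2)) M0; lra.
Qed.

Lemma step_neq0 k : d k != 0.
Proof.
apply/negP => /eqP d0; have [dual primal _ _] := CI k; apply: (@NS k).
rewrite d0 mulmx0 add0r in dual; rewrite d0 mulmx0 in primal.
by split; [rewrite dual subrr | rewrite -[c _]opprK -primal oppr0].
Qed.

Definition reduction_const := 8 / ze + tau_m1 * Cn / sigma.

Lemma reduction_const_gt0 : 0 < reduction_const.
Proof.
have [s0 _] := andP sigma01.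
have : 0 < 8 / ze by apply: divr_gt0.
have := divr_ge0 (mulr_ge0 (ltW tau_m1_gt0) Cn_ge0) (ltW s0).
rewrite /reduction_const; lra.
Qed.

Lemma step_sqr_le_Dq k : tau_min * norm2 (d k) ^+ 2 <= reduction_const * Dq_k k.
Proof.
have [s0 _] := andP sigma01; have /andP[t_lo t_hi] := tau_bounds k; have t0 := tau_gt0 k.
have M0 : 0 <= M k by rewrite le_max lexx orbT.
have c0 := norm1_ge0 (c (x k)); set c1 := norm1 (c (x k)) in c0 *.
have [_ d_le] := step_bounds k; rewrite -/c1 in d_le.
have := ler_wpM2r (sqr_ge0 (norm2 (d k))) t_lo.
have := ler_wpM2l (ltW t0) d_le.
have -> : tau k * (4 / ze * M k + Cn * c1) = 8 / ze * (tau k / 2 * M k) + tau k * Cn * c1.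
  by field; rewrite gt_eqF.
(* [Cn |c|_1] is paid for by the [sigma |c|_1] part of [Dq] *)
have : tau k * Cn * c1 <= tau_m1 * Cn / sigma * (sigma * c1).
  have -> : tau_m1 * Cn / sigma * (sigma * c1) = tau_m1 * Cn * c1 by field; rewrite gt_eqF.
  by rewrite -!mulrA ler_wpM2r ?mulr_ge0.
have := ler_wpM2l (ltW reduction_const_gt0) (Dq_ge_model k).
have := mulr_ge0 (divr_ge0 (ler0n _ 8) (ltW ze_gt0)) (mulr_ge0 (ltW s0) c0).
have := mulr_ge0 (divr_ge0 (mulr_ge0 (ltW tau_m1_gt0) Cn_ge0) (ltW s0))
  (mulr_ge0 (divr_ge0 (ltW t0) (ler0n _ 2)) M0).
rewrite /reduction_const -/c1; lra.
Qed.

Lemma Dq_ratio_ge k Lam Lmax : 0 < Lam <= Lmax ->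
  tau_min / (reduction_const * Lmax) <= Dq_k k / (Lam * norm2 (d k) ^+ 2).
Proof.
move=> /andP[Lam0 LamL]; have Lmax0 := lt_le_trans Lam0 LamL.
have D0 : 0 < norm2 (d k) ^+ 2 by rewrite exprn_gt0 // norm2_gt0 step_neq0.
have KL0 := mulr_gt0 reduction_const_gt0 Lmax0; have LD0 := mulr_gt0 Lam0 D0.
rewrite ler_pdivrMr // mulrAC ler_pdivlMr //.
have := ler_wpM2r (ltW Lam0) (step_sqr_le_Dq k).
have := ler_wpM2l (mulr_ge0 (ltW reduction_const_gt0) (Dq_ge0 k)) LamL.
nra.
Qed.

Variables (Lf : R) (gam : 'I_m -> R).
Hypotheses (Lf_ge0 : 0 <= Lf) (gam_ge0 : forall i, 0 <= gam i) (Xx : forall k, X (x k)).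
Hypothesis f_upper : forall z h, X z -> X (z + h) ->
  f (z + h) <= f z + dotp (gradf z) h + Lf * norm2 h ^+ 2.
Hypothesis c_upper : forall i z h, X z -> X (z + h) ->
  `|c (z + h) i 0| <= `|c z i 0 + (J z *m h) i 0| + gam i * norm2 h ^+ 2.

Lemma f_upper_step k a : X (x k + a *: d k) ->
  f (x k + a *: d k)
    <= f (x k) + a * dotp (gradf (x k)) (d k) + Lf * (a ^+ 2 * norm2 (d k) ^+ 2).
Proof. by move/(f_upper (Xx k)); rewrite dotpZr norm2Z_sqr. Qed.

Lemma c_upper_step k i a : X (x k + a *: d k) ->
  `|c (x k + a *: d k) i 0|
    <= `|c (x k) i 0 + a * (J (x k) *m d k) i 0| + gam i * (a ^+ 2 * norm2 (d k) ^+ 2).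
Proof. by move/(c_upper i (Xx k)); rewrite -scalemxAr mxE norm2Z_sqr. Qed.

Lemma SD_small_steps :
  exists2 beta, 0 < beta & forall k a, 0 <= a <= beta -> X (x k + a *: d k) ->
    SD f c eta (x k) (tau k) (gradf (x k)) (H k) (d k) a.
Proof.
have [e0 e1] := andP eta01.
pose Lam := tau_m1 * Lf + \sum_i gam i + 1.
have gam_sum0 : 0 <= \sum_i gam i by apply: sumr_ge0 => i _.
have Lam0 : 0 < Lam by have := mulr_ge0 (ltW tau_m1_gt0) Lf_ge0; rewrite /Lam; lra.
have K0 := reduction_const_gt0.
exists (Num.min 1 ((1 - eta) * tau_min / (reduction_const * Lam))).
  by rewrite lt_min ltr01 divr_gt0 ?mulr_gt0 ?subr_gt0 ?tau_min_gt0.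
move=> k a /andP[a0]; rewrite le_min => /andP[a1 a_small] Xa.
rewrite ler_pdivlMr ?mulr_gt0 // in a_small.
have [_ primal _ _] := CI k; set D := norm2 (d k) ^+ 2.
have D0 : 0 <= D := sqr_ge0 _.
have := phi_step_le (H k) (ltW (tau_gt0 k)) (introT andP (conj a0 a1)) primal
  (f_upper_step Xa) (fun i => c_upper_step i Xa).
have key : a * Lam * D <= (1 - eta) * Dq_k k.
  rewrite -(ler_pM2l tau_min_gt0).
  have := ler_wpM2l (mulr_ge0 a0 (ltW Lam0)) (step_sqr_le_Dq k).
  have := ler_wpM2r (Dq_ge0 k) a_small.
  rewrite -/D; nra.
have : (tau k * Lf + \sum_i gam i) * (a ^+ 2 * D) <= Lam * (a ^+ 2 * D).
  apply: ler_wpM2r; first by rewrite mulr_ge0 ?sqr_ge0.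
  have := ler_wpM2r Lf_ge0 (andP (tau_bounds k)).2; rewrite /Lam; lra.
have := ler_wpM2l a0 key.
rewrite /SD -/D; lra.
Qed.

Lemma algorithm2_step_lb nu abar : 0 < nu -> 0 < abar ->
  algorithm2 f gradf c X eta nu abar x d H tau alpha ->
  exists alpha_min, 0 < alpha_min /\ forall k, alpha_min <= alpha k.
Proof.
move=> nu0 abar0 A2; have [beta beta0 SD_beta] := SD_small_steps.
exists (Num.min abar (nu * beta)); split; first by rewrite lt_min abar0 mulr_gt0.
move=> k; have [j [-> _ noSD Xtrial]] := A2 k.
apply: (backtracking_ge nu0) => i ij; rewrite ltNge; apply/negP => small.
apply: (noSD i ij); apply: (SD_beta _ _ _ (Xtrial i (ltnW ij))).
by rewrite small mulr_ge0 ?exprn_ge0 ?ltW.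
Qed.

Lemma LF_large k L a : 2 * Lf <= L -> X (x k + a *: d k) ->
  LF f (x k) (gradf (x k)) (d k) L a.
Proof.
move=> LfL Xa; apply: le_trans (f_upper_step Xa) _; rewrite /LF lerD2l.
have := ler_wpM2r (mulr_ge0 (sqr_ge0 a) (sqr_ge0 (norm2 (d k)))) LfL; lra.
Qed.

Lemma LC_large k i g a : 2 * gam i <= g -> X (x k + a *: d k) ->
  LC c J (x k) (d k) i g a.
Proof.
move=> gamg Xa; apply: le_trans (c_upper_step i Xa) _; rewrite /LC lerD2l.
have := ler_wpM2r (mulr_ge0 (sqr_ge0 a) (sqr_ge0 (norm2 (d k)))) gamg; lra.
Qed.

Lemma algorithm1_Lambda_bounded rho Lm1 gm1 :
  1 < rho -> 0 < Lm1 -> (forall i, 0 < gm1 i) ->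
  algorithm1 f gradf c J X eta rho Lm1 gm1 x d H tau alpha ->
  exists2 Lmax, 0 < Lmax & forall k, exists2 Lam, 0 < Lam <= Lmax &
    alpha k = alpha_A1 c eta (x k) (tau k) (gradf (x k)) (H k) (d k) Lam.
Proof.
move=> rho1 Lm10 gm10 [Lk [gk [jk A1]]]; have rho0 := lt_trans ltr01 rho1.
pose a k j := alpha_A1 c eta (x k) (tau k) (gradf (x k)) (H k) (d k)
                (tau k * Lk k j + \sum_i gk k j i).
have Xtrial k j : (j < jk k)%N -> X (x k + a k j *: d k).
  by move=> /ltnW jk_j; have [_ [_ [Xt _]]] := A1 k; exact: (Xt j jk_j).
pose Lmax := Num.max Lm1 (rho * (2 * Lf)).
pose Gmax i := Num.max (gm1 i) (rho * (2 * gam i)).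
have L_bd : forall k j, (j <= jk k)%N -> 0 < Lk k j <= Lmax.
  apply: (safeguarded_estimate_bounded rho0) => [k|k j jk_j]; first by case: (A1 k).
  have [_ [_ [_ [/(_ j jk_j)[_ keep inc _ _] _]]]] := A1 k.
  have [lf|nlf] := pselect (LF f (x k) (gradf (x k)) (d k) (Lk k j) (a k j)).
    by left; exact: (keep lf).
  right; split; last exact: (inc nlf).
  by rewrite ltNge; apply/negP => big; exact: (nlf (LF_large big (Xtrial k j jk_j))).
have G_bd i : forall k j, (j <= jk k)%N -> 0 < gk k j i <= Gmax i.
  apply: (safeguarded_estimate_bounded rho0) => [k|k j jk_j]; first by case: (A1 k) => _ [].
  have [_ [_ [_ [/(_ j jk_j)[_ _ _ keep inc] _]]]] := A1 k.
  have [lc|nlc] := pselect (LC c J (x k) (d k) i (gk k j i) (a k j)).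
    by left; exact: (keep i lc).
  right; split; last exact: (inc i nlc).
  by rewrite ltNge; apply/negP => big; exact: (nlc (LC_large big (Xtrial k j jk_j))).
have Lmax0 : 0 < Lmax by rewrite lt_max Lm10.
have G0 : 0 <= \sum_i Gmax i by apply: sumr_ge0 => i _; rewrite le_max ltW.
exists (tau_m1 * Lmax + \sum_i Gmax i) => [|k]; first by rewrite ltr_wpDr ?mulr_gt0.
have [_ [_ [_ [_ [_ ->]]]]] := A1 k.
have /andP[L0 LL] := L_bd k (jk k) (leqnn _).
exists (tau k * Lk k (jk k) + \sum_i gk k (jk k) i) => //.
have G_le : \sum_i gk k (jk k) i <= \sum_i Gmax i.
  by apply: ler_sum => i _; case/andP: (G_bd i k (jk k) (leqnn _)).
have /andP[_ t_hi] := tau_bounds k.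
rewrite ltr_wpDr ?mulr_gt0 ?tau_gt0 ?sumr_ge0 //=; last first.
  by move=> i _; case/andP: (G_bd i k (jk k) (leqnn _)) => /ltW.
by rewrite lerD // ler_pM // ltW ?tau_gt0.
Qed.

Lemma algorithm1_step_lb rho Lm1 gm1 :
  1 < rho -> 0 < Lm1 -> (forall i, 0 < gm1 i) ->
  algorithm1 f gradf c J X eta rho Lm1 gm1 x d H tau alpha ->
  exists alpha_min, 0 < alpha_min /\ forall k, alpha_min <= alpha k.
Proof.
move=> rho1 Lm10 gm10 A1; have [e0 e1] := andP eta01.
have [Lmax Lmax0 Lam_bd] := algorithm1_Lambda_bounded rho1 Lm10 gm10 A1.
exists (Num.min 1 (2 * (1 - eta) * (tau_min / (reduction_const * Lmax)))); split.
  by rewrite lt_min ltr01 !mulr_gt0 ?subr_gt0 ?invr_gt0 ?mulr_gt0 ?tau_min_gt0 ?reduction_const_gt0.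
move=> k; have [Lam Lam_le ->] := Lam_bd k.
apply: alpha_A1_ge; first by rewrite ge_min lexx.
rewrite ge_min -[2 * (1 - eta) * _ / _]mulrA; apply/orP; right.
apply: ler_wpM2l; first by rewrite mulr_ge0 // subr_ge0 ltW.
exact: Dq_ratio_ge.
Qed.

End Iteration.

Theorem lemma2p17 (R : realType) (n m : nat)
  (f : 'cV[R]_n -> R) (gradf : 'cV[R]_n -> 'cV[R]_n)
  (c : 'cV[R]_n -> 'cV[R]_m) (J : 'cV[R]_n -> 'M[R]_(m, n))
  (X : set 'cV[R]_n)
  (sigma eps eta tau_m1 rho Lm1 nu abar kappaH zeta : R) (gm1 : 'I_m -> R)
  (x d : nat -> 'cV[R]_n) (y : nat -> 'cV[R]_m) (H : nat -> 'M[R]_n)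
  (tau alpha : nat -> R) :
  0 < sigma < 1 -> 0 < eps < 1 -> 0 < eta < 1 -> 0 < tau_m1 ->
  0 < kappaH -> 0 < zeta ->
  standing_assumption f gradf c J X x ->
  matrix_assumption J x H kappaH zeta ->
  common_iteration f gradf c J sigma eps tau_m1 x d y H tau alpha ->
  never_stops gradf c J x y ->
  ((1 < rho /\ 0 < Lm1 /\ (forall i, 0 < gm1 i) /\
    algorithm1 f gradf c J X eta rho Lm1 gm1 x d H tau alpha)
   \/
   (0 < nu < 1 /\ 0 < abar /\
    algorithm2 f gradf c X eta nu abar x d H tau alpha)) ->
  exists alpha_min : R, 0 < alpha_min /\ forall k : nat, alpha_min <= alpha k.
Proof.
move=> sigma01 eps01 eta01 tau_m1_gt0 kH_gt0 ze_gt0 SA MA CI NS alg.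
case: SA => _ [convX [Xx [f_diff [c_diff [_ [[Bg g_bd] [[Lf grad_lip] [[Bc c_bd]
  [_ [[gam J_lip] [s [s_gt0 J_sing]]]]]]]]]]]].
have [Cd Cd_gt0 [Cn Cn_ge0 newton]] :=
  newton_step_bounds m n kH_gt0 ze_gt0 s_gt0 (normr_ge0 Bg) (normr_ge0 Bc).
have step_bounds k := let: And4 dual primal _ _ := CI k in let: And3 _ Hk_bd Hk_curv := MA k in
  newton _ _ _ _ _ _ dual primal Hk_bd Hk_curv (J_sing _ (Xx k))
    (le_trans (g_bd _ (Xx k)) (ler_norm Bg)) (le_trans (c_bd _ (Xx k)) (ler_norm Bc)).
have f_upper z h : X z -> X (z + h) -> f (z + h) <= f z + dotp (gradf z) h + `|Lf| * norm2 h ^+ 2.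
  apply: (lipschitz_grad_upper convX f_diff (normr_ge0 Lf)) => w w' Xw Xw'.
  exact: le_trans (grad_lip w w' Xw Xw') (ler_wpM2r (norm2_ge0 _) (ler_norm Lf)).
have c_upper i z h : X z -> X (z + h) ->
    `|c (z + h) i 0| <= `|c z i 0 + (J z *m h) i 0| + `|gam i| * norm2 h ^+ 2.
  apply: (lipschitz_component_upper convX c_diff (normr_ge0 (gam i))) => w w' Xw Xw'.
  exact: le_trans (J_lip i w w' Xw Xw') (ler_wpM2r (norm2_ge0 _) (ler_norm (gam i))).
case: alg => [[rho1 [Lm1_gt0 [gm1_gt0 A1]]] | [/andP[nu_gt0 _] [abar_gt0 A2]]].
  exact: (algorithm1_step_lb sigma01 eps01 eta01 tau_m1_gt0 ze_gt0 Cd_gt0 Cn_ge0 CI NS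
    step_bounds Xx f_upper c_upper rho1 Lm1_gt0 gm1_gt0 A1).
exact: (algorithm2_step_lb sigma01 eps01 eta01 tau_m1_gt0 ze_gt0 Cd_gt0 Cn_ge0 CI
  step_bounds (normr_ge0 Lf) (fun i => normr_ge0 (gam i)) Xx f_upper c_upper nu_gt0 abar_gt0 A2).
Qed.
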